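(* Let $N$ be a finite set, $C \subseteq 2^{N}$ a family of subsets of $N$, and let $(x^*,y^* )$ be a vertex of the polytope $\bar{P}(C) = \{ (x,y) \in [0,1]^{|N|+1} : \sum_{j \in S} x_j \ge y \ \forall S \in C\}$. Then $y^* \in \{0,1\}$.
   Context: Here $x = (x_j)_{j\in N}$ and $y$ is a scalar variable. *)

From mathcomp Require Import all_boot all_order all_algebra.
Set Implicit Arguments. Unset Strict Implicit. Unset Printing Implicit Defensive.
Import Order.TTheory GRing.Theory Num.Theory.
Local Open Scope ring_scope.

Definition in_Pbar (R : realFieldType) (N : finType) (C : {set {set N}})
    (x : {ffun N -> R}) (y : R) : Prop :=
  (forall j : N, 0 <= x j <= 1) /\ (0 <= y <= 1) /\
  (forall S : {set N}, S \in C -> y <= \sum_(j in S) x j).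

Definition is_vertex_Pbar (R : realFieldType) (N : finType) (C : {set {set N}})
    (x : {ffun N -> R}) (y : R) : Prop :=
  in_Pbar C x y /\
  forall (x1 x2 : {ffun N -> R}) (y1 y2 t : R),
    in_Pbar C x1 y1 -> in_Pbar C x2 y2 -> 0 < t < 1 ->
    (forall j, x j = t * x1 j + (1 - t) * x2 j) ->
    y = t * y1 + (1 - t) * y2 ->
    x1 = x2 /\ y1 = y2.

From mathcomp Require Import all_boot all_order all_algebra.
Set Implicit Arguments. Unset Strict Implicit. Unset Printing Implicit Defensive.
Import Order.TTheory GRing.Theory Num.Theory.
Local Open Scope ring_scope.

(* If 0 < y < 1, then (x, y) = y (x1, 1) + (1 - y) (x2, 0) with
   x1 = min (x / y, 1) and x2 = (x - y)^+ / (1 - y), both taken coordinatewise.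
   Capping at 1 preserves the covering inequalities sum_{j in S} x_j / y >= 1,
   so both points lie in Pbar(C); as their y-coordinates differ, (x, y) is not
   a vertex. *)

Lemma sum_min1_ge (R : realDomainType) (I : finType) (A : {pred I}) (a : I -> R) :
  (forall i, 0 <= a i) ->
  Num.min (\sum_(i in A) a i) 1 <= \sum_(i in A) Num.min (a i) 1.
Proof.
move=> a_ge0.
have min_ge0 i : 0 <= Num.min (a i) 1 by rewrite le_min a_ge0 ler01.
have [i /andP[iA a_ge1] | no_big] := pickP [pred i in A | 1 <= a i].
  by rewrite [X in _ <= X](bigD1 i) //= (min_r a_ge1) ge_min lerDl sumr_ge0 ?orbT.
rewrite [X in _ <= X](eq_bigr a) ?ge_min ?lexx // => i iA.
by rewrite min_l // ltW // ltNge; apply/negbT; move: (no_big i); rewrite /= iA.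
Qed.

Lemma min_add_max_sub (R : realDomainType) (a b : R) : Num.min a b + Num.max (a - b) 0 = a.
Proof.
case: (leP a b) => [a_le_b | b_lt_a].
  by rewrite max_r ?subr_le0 // addr0.
by rewrite max_l ?subr_ge0 ?ltW // addrC subrK.
Qed.

Section Pbar.

Variables (R : realFieldType) (N : finType) (C : {set {set N}}).

Lemma in_Pbar_zero (x : {ffun N -> R}) :
  (forall j, 0 <= x j <= 1) -> in_Pbar C x 0.
Proof.
move=> x01; split=> //; split; first by rewrite lexx ler01.
by move=> S _; apply: sumr_ge0 => j _; case/andP: (x01 j).
Qed.

Definition Pbar_cap (x : {ffun N -> R}) (y : R) : {ffun N -> R} :=
  [ffun j => Num.min (x j / y) 1].

Definition Pbar_excess (x : {ffun N -> R}) (y : R) : {ffun N -> R} :=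
  [ffun j => Num.max (x j - y) 0 / (1 - y)].

Lemma in_Pbar_cap (x : {ffun N -> R}) (y : R) :
  in_Pbar C x y -> 0 < y -> in_Pbar C (Pbar_cap x y) 1.
Proof.
move=> [x01 [_ cover]] y_gt0.
have xy_ge0 j : 0 <= x j / y by case/andP: (x01 j) => x_ge0 _; rewrite divr_ge0 // ltW.
split; [|split; first by rewrite lexx ler01].
  by move=> j; rewrite ffunE le_min xy_ge0 ler01 ge_min lexx orbT.
move=> S SC; under eq_bigr do rewrite ffunE.
apply: le_trans (sum_min1_ge S xy_ge0); rewrite le_min lexx andbT.
by rewrite -mulr_suml ler_pdivlMr // mul1r cover.
Qed.

Lemma in_Pbar_excess (x : {ffun N -> R}) (y : R) :
  in_Pbar C x y -> y < 1 -> in_Pbar C (Pbar_excess x y) 0.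
Proof.
move=> [x01 _] y_lt1; apply: in_Pbar_zero => j; rewrite ffunE.
have y1_gt0 : 0 < 1 - y by rewrite subr_gt0.
rewrite divr_ge0 ?le_max ?lexx ?orbT ?(ltW y1_gt0) //= ler_pdivrMr // mul1r ge_max.
by case/andP: (x01 j) => _ x_le1; rewrite lerD2r x_le1 ltW.
Qed.

Lemma Pbar_cap_excess_convex (x : {ffun N -> R}) (y : R) (j : N) :
  0 < y < 1 -> x j = y * Pbar_cap x y j + (1 - y) * Pbar_excess x y j.
Proof.
case/andP=> y_gt0 y_lt1; rewrite !ffunE.
have y1_neq0 : 1 - y != 0 by rewrite subr_eq0 eq_sym lt_eqF.
rewrite mulrCA divff // mulr1 minr_pMr ?ltW // mulrCA divff ?gt_eqF //.
by rewrite !mulr1 min_add_max_sub.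
Qed.

End Pbar.

Theorem lemma2 (R : realFieldType) (N : finType) (C : {set {set N}})
    (xs : {ffun N -> R}) (ys : R) :
  is_vertex_Pbar C xs ys -> ys = 0 \/ ys = 1.
Proof.
move=> [Pxy vertex]; have [_ [/andP[y_ge0 y_le1] _]] := Pxy.
have [-> | y_neq0] := eqVneq ys 0; first by left.
have [-> | y_neq1] := eqVneq ys 1; first by right.
have y01 : 0 < ys < 1 by rewrite !lt_def y_neq0 eq_sym y_neq1 y_ge0 y_le1.
have [y_gt0 y_lt1] := andP y01.
have y_comb : ys = ys * 1 + (1 - ys) * 0 by rewrite mulr1 mulr0 addr0.
have [_ /eqP] := vertex _ _ _ _ _ (in_Pbar_cap Pxy y_gt0) (in_Pbar_excess Pxy y_lt1)
  y01 (fun j => Pbar_cap_excess_convex xs j y01) y_comb.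
by rewrite oner_eq0.
Qed.
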